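(* Suppose users bid their true costs. Let $g_{avg}(\pi)$ denote the expected utility $\mathbb{E}_{\mathbf{Y}_{\mathcal{W}}}[g(\mathbf{y}_{\mathcal{S}})]$ of the set $\mathcal{S}$ (with observations $\mathbf{y}_{\mathcal{S}}$) selected by an adaptive policy $\pi$. Let $\pi_{OPT}$ be the allocation policy of \textsc{SeqOpt} and $\pi_G$ that of \textsc{SeqGreedy} (defined in the context). Then $g_{avg}(\pi_{OPT})\le\frac{e}{e-1}\bigl[g_{avg}(\pi_G)+f_{\max}\bigr]$.
   Context: Setting. $\mathcal{V}$ is a finite set and $f:2^{\mathcal{V}}\to\mathbb{R}_{\ge0}$ is monotone and submodular. $\mathcal{W}$ is a finite set of users and $\mathcal{O}\subseteq 2^{\mathcal{V}}$. Each user $w$ has a random sensing profile $Y_w$ with values in $\mathcal{O}$; the $Y_w$ are independent with known distributions, $\mathbf{Y}_{\mathcal{W}}=(Y_w)_w$. For $\mathcal{S}\subseteq\mathcal{W}$ and values $y_s$, write $\mathbf{y}_{\mathcal{S}}=\{(s,y_s):s\in\mathcal{S}\}$ and $g(\mathbf{y}_{\mathcal{S}})=f(\bigcup_{s\in\mathcal{S}}y_s)$. Each user's maximal contribution is bounded by $f_{\max}$: $g(\mathbf{y}_{\mathcal{S}}\cup\{(w,y)\})-g(\mathbf{y}_{\mathcal{S}})\le f_{\max}$ always. The conditional expected marginal gain is $\Delta_g(w\mid\mathbf{y}_{\mathcal{S}})=\sum_{y\in\mathcal{O}}P(Y_w=y\mid\mathbf{y}_{\mathcal{S}})\,[g(\mathbf{y}_{\mathcal{S}}\cup\{(w,y)\})-g(\mathbf{y}_{\mathcal{S}})]$.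 Each user $w$ has cost $c_w>0$, bid $b_w=c_w$; budget $\mathcal{B}>0$. An adaptive policy sequentially selects a next user as a function of the users selected so far and their observed profiles (the profile of a user is observed once she is selected). \textsc{SeqOpt}: an adaptive policy maximizing $\mathbb{E}[g(\mathbf{y}_{\mathcal{S}})]$ among adaptive policies whose selected set always satisfies $\sum_{s\in\mathcal{S}}c_s\le\mathcal{B}$. \textsc{SeqGreedy}: the sequential greedy policy with known costs: starting from $\mathcal{S}=\emptyset$, repeatedly choose among the remaining users $w^*\in\arg\max_w\Delta_g(w\mid\mathbf{y}_{\mathcal{S}})/b_w$; if adding $w^*$ keeps $\sum_{s\in\mathcal{S}}b_s\le\mathcal{B}$, select it and observe its profile, otherwise discard it; i.e. it is the allocation policy of \textsc{SeqTGreedy} without the proportional-share test. *)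

From HB Require Import structures.
From mathcomp Require Import all_boot all_order all_algebra.
From mathcomp Require Import reals sequences exp.
Set Implicit Arguments. Unset Strict Implicit. Unset Printing Implicit Defensive.
Import Order.TTheory GRing.Theory Num.Theory.
Local Open Scope ring_scope.

Section Defs.
Variables (R : realType) (W V : finType).

(* An observation history: the selected users in order, with observed profiles. *)
Definition history := seq (W * {set V}).
Definition realization := {ffun W -> {set V}}.

Definition hist_users (h : history) : {set W} := [set q.1 | q in h].
Definition hist_union (h : history) : {set V} := \bigcup_(q <- h) q.2.
Definition g (f : {set V} -> R) (h : history) : R := f (hist_union h).
Definition hist_cost (c : W -> R) (h : history) : R := \sum_(q <- h) c q.1.

Definition probY (p : W -> {set V} -> R) (ys : realization) : R :=
  \prod_(w : W) p w (ys w).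
Definition consistent (h : history) (ys : realization) : bool :=
  all (fun q => ys q.1 == q.2) h.
Definition cond_prob (p : W -> {set V} -> R) (w : W) (y : {set V}) (h : history) : R :=
  (\sum_(ys : realization | consistent h ys && (ys w == y)) probY p ys)
  / (\sum_(ys : realization | consistent h ys) probY p ys).
Definition Delta (f : {set V} -> R) (p : W -> {set V} -> R) (O : {set {set V}})
    (w : W) (h : history) : R :=
  \sum_(y in O) cond_prob p w y h * (f (hist_union h :|: y) - f (hist_union h)).

(* Execution of an adaptive policy (history -> next user, or None = stop) on
   a realization; the policy stops when it returns None or re-selects a user. *)
Fixpoint run_policy (pi : history -> option W) (fuel : nat) (h : history)
    (ys : realization) : history :=
  match fuel with
  | 0 => h
  | n.+1 => match pi h with
            | Some w => if w \in hist_users h then h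
                        else run_policy pi n (rcons h (w, ys w)) ys
            | None => h
            end
  end.
Definition policy_outcome (pi : history -> option W) (ys : realization) : history :=
  run_policy pi #|W| [::] ys.

Definition feasible_policy (c : W -> R) (B : R) (pi : history -> option W) : Prop :=
  forall ys, hist_cost c (policy_outcome pi ys) <= B.

(* SeqGreedy with a tie-breaking rule pick (choosing among remaining users Rem) *)
Fixpoint greedy_run (c : W -> R) (B : R) (pick : history -> {set W} -> W)
    (fuel : nat) (h : history) (Rem : {set W}) (ys : realization) : history :=
  match fuel with
  | 0 => h
  | n.+1 => if Rem == set0 then h else
            let w := pick h Rem in
            let h' := if hist_cost c h + c w <= B then rcons h (w, ys w) else h in
            greedy_run c B pick n h' (Rem :\ w) ys
  end.
Definition greedy_outcome c B pick (ys : realization) : history :=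
  greedy_run c B pick #|W| [::] setT ys.

Definition greedy_rule (f : {set V} -> R) (p : W -> {set V} -> R) (O : {set {set V}})
    (c : W -> R) (pick : history -> {set W} -> W) : Prop :=
  forall h Rem, Rem != set0 ->
    pick h Rem \in Rem /\
    forall w, w \in Rem -> Delta f p O w h / c w <= Delta f p O (pick h Rem) h / c (pick h Rem).

Definition g_avg (f : {set V} -> R) (p : W -> {set V} -> R)
    (outcome : realization -> history) : R :=
  \sum_(ys : realization) probY p ys * g f (outcome ys).

End Defs.

From HB Require Import structures.
From mathcomp Require Import all_boot all_order all_algebra.
From mathcomp Require Import reals sequences exp.
From mathcomp Require Import ring lra.
Set Implicit Arguments. Unset Strict Implicit. Unset Printing Implicit Defensive.
Import Order.TTheory GRing.Theory Num.Theory.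
Local Open Scope ring_scope.

(* Run the greedy rule continuously in the budget: [greedy_interp t] is the
   expected value of the greedy run stopped at budget [t], plus the unspent
   budget credited at the current best gain-per-cost ratio.  Since the profiles
   are independent, that ratio predicts the expected marginal gain of the next
   greedy pick, so between consecutive achievable costs [greedy_interp] grows
   with slope [greedy_rate]; by submodularity, a budget-feasible policy adds at
   most [B * greedy_rate t] on top of the greedy history.  Hence the gap between
   its value OPT and [greedy_interp t] shrinks by a factor [1 - dt / B] at each
   step and is at most [OPT * e^(-t/B)].  At [t = B] the credited part is at most
   one user's expected gain, hence at most [fmax], and the greedy run up to [B]
   is part of SeqGreedy's selection. *)

Section ProductMeasure.
Variables (R : realType) (W V : finType) (p : W -> {set V} -> R).
Hypothesis p_ge0 : forall w y, 0 <= p w y.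
Hypothesis p_sum1 : forall w, \sum_(y : {set V}) p w y = 1.

Notation real := (realization W V).

Definition upd (ys : real) (w0 : W) (z : {set V}) : real :=
  [ffun x => if x == w0 then z else ys x].

Lemma upd_id ys w0 : upd ys w0 (ys w0) = ys.
Proof. by apply/ffunP => x; rewrite ffunE; case: eqP => // ->. Qed.

Lemma upd_upd ys w0 z z' : upd (upd ys w0 z) w0 z' = upd ys w0 z'.
Proof. by apply/ffunP => x; rewrite !ffunE; case: eqP. Qed.

Lemma upd_at ys w0 z : upd ys w0 z w0 = z.
Proof. by rewrite ffunE eqxx. Qed.

Lemma probY_ge0 ys : 0 <= probY p ys.
Proof. by apply: prodr_ge0 => w _. Qed.

Lemma probY_sum1 : \sum_ys probY p ys = 1.
Proof.
rewrite /probY -(bigA_distr_bigA (fun w y => p w y)) /=.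
by rewrite big1 // => w _; rewrite p_sum1.
Qed.

Definition expect (X : real -> R) : R := \sum_ys probY p ys * X ys.

Lemma expectD X Y : expect (fun ys => X ys + Y ys) = expect X + expect Y.
Proof. by rewrite /expect -big_split; apply: eq_bigr => ys _; rewrite mulrDr. Qed.

Lemma expectB X Y : expect (fun ys => X ys - Y ys) = expect X - expect Y.
Proof. by rewrite /expect -sumrB; apply: eq_bigr => ys _; rewrite mulrBr. Qed.

Lemma expectZ a X : expect (fun ys => a * X ys) = a * expect X.
Proof. by rewrite /expect big_distrr; apply: eq_bigr => ys _; rewrite mulrCA. Qed.

Lemma expect_cst a : expect (fun=> a) = a.
Proof. by rewrite /expect -big_distrl /= probY_sum1 mul1r. Qed.

Lemma expect_sum (I : eqType) (r : seq I) (X : I -> real -> R) :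
  expect (fun ys => \sum_(i <- r) X i ys) = \sum_(i <- r) expect (X i).
Proof.
rewrite /expect exchange_big /=; apply: eq_bigr => ys _; exact: big_distrr.
Qed.

Lemma eq_expect X Y : (forall ys, probY p ys != 0 -> X ys = Y ys) ->
  expect X = expect Y.
Proof.
move=> XY; apply: eq_bigr => ys _.
by have [->|/XY ->] := eqVneq (probY p ys) 0; rewrite ?mul0r.
Qed.

Lemma ler_expect X Y : (forall ys, probY p ys != 0 -> X ys <= Y ys) ->
  expect X <= expect Y.
Proof.
move=> XY; apply: ler_sum => ys _.
have [->|Pne] := eqVneq (probY p ys) 0; first by rewrite !mul0r.
by rewrite ler_wpM2l ?probY_ge0 ?XY.
Qed.

Definition probY_except w0 (ys : real) : R := \prod_(w | w != w0) p w (ys w).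

Lemma probY_split w0 ys : probY p ys = p w0 (ys w0) * probY_except w0 ys.
Proof. by rewrite /probY (bigD1 w0). Qed.

Lemma probY_except_upd w0 ys z : probY_except w0 (upd ys w0 z) = probY_except w0 ys.
Proof. by apply: eq_bigr => w /negPf hw; rewrite ffunE hw. Qed.

(* By independence, when [K] ignores coordinate [w0] of [ys], that coordinate
   may be resampled from its marginal. *)
Lemma resample w0 (K : real -> {set V} -> R) :
  (forall ys z z', K (upd ys w0 z') z = K ys z) ->
  expect (fun ys => K ys (ys w0)) = expect (fun ys => \sum_z p w0 z * K ys z).
Proof.
move=> Kinv; rewrite /expect.
have -> : \sum_ys probY p ys * \sum_z p w0 z * K ys z =
    \sum_(ys : real) \sum_(z : {set V})
       (p w0 (ys w0) * probY_except w0 ys * p w0 z * K ys z).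
  apply: eq_bigr => ys _; rewrite big_distrr /= (probY_split w0).
  by apply: eq_bigr => z _; rewrite !mulrA.
rewrite pair_big /=.
pose swap (q : real * {set V}) := (upd q.1 w0 q.2, q.1 w0).
have swapK : cancel swap swap by case=> ys z; rewrite /swap /= upd_at upd_upd upd_id.
rewrite (reindex_inj (can_inj swapK)) /=.
rewrite (eq_bigr (fun q => probY p q.1 * K q.1 (q.1 w0) * p w0 q.2)); last first.
  case=> ys z _ /=; rewrite upd_at probY_except_upd Kinv (probY_split w0); ring.
rewrite -(pair_bigA _ (fun ys z => probY p ys * K ys (ys w0) * p w0 z)) /=.
by apply: eq_bigr => ys _; rewrite -big_distrr /= p_sum1 mulr1.
Qed.

End ProductMeasure.

Section Submodularity.
Variables (R : realType) (V : finType) (f : {set V} -> R).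
Hypothesis f_mono : forall A A' : {set V}, A \subset A' -> f A <= f A'.
Hypothesis f_submod : forall (A A' : {set V}) (x : V), A \subset A' -> x \notin A' ->
  f (x |: A') - f A' <= f (x |: A) - f A.

Definition gain (A Y : {set V}) : R := f (A :|: Y) - f A.

Lemma gain_ge0 A Y : 0 <= gain A Y.
Proof. by rewrite subr_ge0 f_mono ?subsetUl. Qed.

Lemma gain_antitone (A A' Y : {set V}) : A \subset A' -> gain A' Y <= gain A Y.
Proof.
rewrite /gain => sAA'; rewrite -(set_enum Y); elim: (enum Y) => [|x s IH].
  by rewrite set_nil !setU0 !subrr.
rewrite set_cons (setUCA A') (setUCA A); set Y' := [set:: s].
have gain_x : f (x |: (A' :|: Y')) - f (A' :|: Y') <= f (x |: (A :|: Y')) - f (A :|: Y').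
  have [xA'Y|xA'Y] := boolP (x \in A' :|: Y').
    rewrite (setUidPr _) ?sub1set // subrr subr_ge0; apply: f_mono; exact: subsetUr.
  by apply: f_submod => //; exact: setSU.
have telescope B0 : f (x |: (B0 :|: Y')) - f B0 =
    (f (x |: (B0 :|: Y')) - f (B0 :|: Y')) + (f (B0 :|: Y') - f B0) by ring.
by rewrite !telescope; exact: lerD.
Qed.

Lemma gain_bigcup_le (I : Type) (r : seq I) (P : pred I) (F : I -> {set V}) A :
  gain A (\bigcup_(i <- r | P i) F i) <= \sum_(i <- r | P i) gain A (F i).
Proof.
elim: r => [|i r IH]; first by rewrite !big_nil /gain setU0 subrr.
rewrite !big_cons; case: ifP => // _; set U := \bigcup_(j <- r | P j) F j.
have -> : gain A (F i :|: U) = gain (A :|: F i) U + gain A (F i).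
  by rewrite /gain setUA; ring.
by rewrite addrC lerD2l (le_trans _ IH) // gain_antitone ?subsetUl.
Qed.

End Submodularity.

Section Histories.
Variables (R : realType) (W V : finType).
Notation hist := (history W V).
Notation real := (realization W V).
Implicit Types (h : hist) (ys : real).

Lemma hist_usersE h w : (w \in hist_users h) = (w \in map fst h).
Proof. by apply/imsetP/mapP => [[q qh ->]|[q qh ->]]; exists q. Qed.

Lemma hist_users_rcons h q : hist_users (rcons h q) = q.1 |: hist_users h.
Proof.
by apply/setP => w; rewrite in_setU1 !hist_usersE map_rcons mem_rcons inE.
Qed.

Lemma hist_users_nil : hist_users ([::] : hist) = set0.
Proof. by apply/setP => w; rewrite hist_usersE inE. Qed.

Lemma hist_union_rcons h q : hist_union (rcons h q) = hist_union h :|: q.2.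
Proof. by rewrite /hist_union big_rcons. Qed.

Lemma hist_cost_rcons (c : W -> R) h q :
  hist_cost c (rcons h q) = hist_cost c h + c q.1.
Proof. by rewrite /hist_cost big_rcons. Qed.

Lemma hist_cost_uniq (c : W -> R) h : uniq (map fst h) ->
  hist_cost c h = \sum_(w in hist_users h) c w.
Proof.
move=> hu; rewrite /hist_cost -(big_map fst xpredT c) big_uniq //.
by apply: eq_bigl => w; rewrite hist_usersE.
Qed.

Lemma consistent_rcons h q ys :
  consistent (rcons h q) ys = (ys q.1 == q.2) && consistent h ys.
Proof. by rewrite /consistent all_rcons. Qed.

Lemma consistent_cat h h' ys :
  consistent (h ++ h') ys = consistent h ys && consistent h' ys.
Proof. by rewrite /consistent all_cat. Qed.

Lemma consistent_upd h ys w0 z : w0 \notin hist_users h ->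
  consistent h (upd ys w0 z) = consistent h ys.
Proof.
rewrite hist_usersE => hw; apply: eq_in_all => q qh /=; rewrite ffunE.
by case: (q.1 =P w0) => // e; case/negP: hw; rewrite -e map_f.
Qed.

Lemma hist_union_consistent h ys : consistent h ys -> uniq (map fst h) ->
  hist_union h = \bigcup_(w in hist_users h) ys w.
Proof.
move=> /allP hc hu; rewrite /hist_union (eq_big_seq (fun q => ys q.1)).
  rewrite -(big_map fst xpredT ys) big_uniq //.
  by apply: eq_bigl => w; rewrite hist_usersE.
by move=> q /hc /eqP.
Qed.

Lemma observed_sub_union h ys w : consistent h ys -> w \in hist_users h ->
  ys w \subset hist_union h.
Proof.
move=> /allP hc; rewrite hist_usersE => /mapP [q qh ->].
rewrite (eqP (hc q qh)) /hist_union (big_rem q qh) /=; exact: subsetUl.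
Qed.

(* The observed histories of adaptive policies: [H ys] depends on the
   realization [ys] only through the profiles it records. *)
Definition nonanticipating (H : real -> hist) :=
  (forall ys, consistent (H ys) ys) /\
  (forall ys ys', consistent (H ys) ys' -> H ys' = H ys).

Section Nonanticipating.
Variable H : real -> hist.
Hypothesis H_na : nonanticipating H.

Lemma nonanticipating_upd ys w0 z : w0 \notin hist_users (H ys) ->
  H (upd ys w0 z) = H ys.
Proof. by case: H_na => Hc Hs hw; apply: Hs; rewrite consistent_upd ?Hc. Qed.

Lemma nonanticipating_mem_upd ys w0 z :
  (w0 \in hist_users (H (upd ys w0 z))) = (w0 \in hist_users (H ys)).
Proof.
have [in_ys|] := boolP (w0 \in hist_users (H ys)); last first.
  by move=> hw; rewrite nonanticipating_upd // (negPf hw).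
apply/negP => /negP hw; have := nonanticipating_upd (ys w0) hw.
by rewrite upd_upd upd_id => e; rewrite e (negPf hw) in in_ys.
Qed.

End Nonanticipating.

Section RunPolicy.
Variable pi : hist -> option W.

Lemma run_policy_prefix n h ys : exists s, run_policy pi n h ys = h ++ s.
Proof.
elim: n h => [|n IH] h /=; first by exists [::]; rewrite cats0.
case: (pi h) => [w|]; last by exists [::]; rewrite cats0.
case: ifP => _; first by exists [::]; rewrite cats0.
have [s ->] := IH (rcons h (w, ys w)); exists ((w, ys w) :: s).
by rewrite -cats1 -catA.
Qed.

Lemma run_policy_consistent n h ys :
  consistent h ys -> consistent (run_policy pi n h ys) ys.
Proof.
elim: n h => [|n IH] h //= hc; case: (pi h) => [w|] //; case: ifP => // _.
by apply: IH; rewrite consistent_rcons eqxx.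
Qed.

Lemma run_policy_uniq n h ys :
  uniq (map fst h) -> uniq (map fst (run_policy pi n h ys)).
Proof.
elim: n h => [|n IH] h //= hu; case: (pi h) => [w|] //; case: ifP => // hw.
by apply: IH; rewrite map_rcons rcons_uniq hu andbT -hist_usersE hw.
Qed.

Lemma run_policy_stop n h ys ys' :
  consistent (run_policy pi n h ys) ys' -> run_policy pi n h ys' = run_policy pi n h ys.
Proof.
elim: n h => [|n IH] h //=; case: (pi h) => [w|] //; case: ifP => // _ hc.
have [s es] := run_policy_prefix n (rcons h (w, ys w)) ys.
move: (hc); rewrite es consistent_cat consistent_rcons /= => /andP[/andP[/eqP -> _] _].
by rewrite -es; apply: IH.
Qed.

Lemma policy_outcome_nonanticipating : nonanticipating (policy_outcome pi).
Proof. by split=> [ys|ys ys']; [exact: run_policy_consistent | exact: run_policy_stop]. Qed.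

Lemma policy_outcome_uniq ys : uniq (map fst (policy_outcome pi ys)).
Proof. exact: run_policy_uniq. Qed.

End RunPolicy.

End Histories.

Section Independence.
Variables (R : realType) (W V : finType) (p : W -> {set V} -> R).
Hypothesis p_ge0 : forall w y, 0 <= p w y.
Hypothesis p_sum1 : forall w, \sum_(y : {set V}) p w y = 1.
Notation hist := (history W V).
Notation real := (realization W V).

Lemma resample_unobserved (H : real -> hist) w (G : real -> hist -> {set V} -> R) :
  nonanticipating H -> (forall ys z' h z, G (upd ys w z') h z = G ys h z) ->
  expect p (fun ys => if w \in hist_users (H ys) then 0 else G ys (H ys) (ys w))
  = expect p (fun ys =>
      if w \in hist_users (H ys) then 0 else \sum_z p w z * G ys (H ys) z).
Proof.
move=> H_na Ginv.
pose K ys z := if w \in hist_users (H ys) then 0 else G ys (H ys) z.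
rewrite (resample p_sum1 (K := K)) => [|ys z z']; last first.
  rewrite /K nonanticipating_mem_upd //; case: ifPn => // hw.
  by rewrite nonanticipating_upd // Ginv.
apply: eq_bigr => ys _; rewrite /K; case: ifP => // _.
by rewrite big1 // => z _; rewrite mulr0.
Qed.

Lemma cond_prob_unobserved (h : hist) ys w y : probY p ys != 0 ->
  consistent h ys -> w \notin hist_users h -> cond_prob p w y h = p w y.
Proof.
move=> Pne hc hw; rewrite /cond_prob.
set den := \sum_(ys' | consistent h ys') probY p ys'.
have den_gt0 : 0 < den.
  rewrite /den (bigD1 ys) //= ltr_pwDl //; first by rewrite lt_def Pne probY_ge0.
  by apply: sumr_ge0 => ys' _; exact: probY_ge0.
suff -> : \sum_(ys' | consistent h ys' && (ys' w == y)) probY p ys' = p w y * den.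
  by rewrite mulfK ?gt_eqF.
pose K (ys' : real) z : R := (consistent h ys' && (z == y))%:R.
have -> : \sum_(ys' | consistent h ys' && (ys' w == y)) probY p ys'
    = expect p (fun ys' => K ys' (ys' w)).
  rewrite big_mkcond; apply: eq_bigr => ys' _.
  by rewrite /K; case: ifP; rewrite ?mulr1 ?mulr0.
rewrite (resample p_sum1 (K := K)) => [|ys' z z']; last by rewrite /K consistent_upd.
rewrite /expect /den big_distrr /= [RHS]big_mkcond; apply: eq_bigr => ys' _.
rewrite (bigD1 y) //= big1 => [|z /negPf zy]; last by rewrite /K zy andbF mulr0.
by rewrite /K eqxx andbT addr0; case: consistent; rewrite ?mulr1 ?mulr0 // mulrC.
Qed.

Variables (f : {set V} -> R) (O : {set {set V}}).
Hypothesis p_supp : forall w y, y \notin O -> p w y = 0.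

Definition exp_gain w (A : {set V}) : R := \sum_z p w z * gain f A z.

Lemma Delta_unobserved (h : hist) ys w : probY p ys != 0 -> consistent h ys ->
  w \notin hist_users h -> Delta f p O w h = exp_gain w (hist_union h).
Proof.
move=> Pne hc hw; rewrite /Delta /exp_gain [RHS](bigID (mem O)) /=.
rewrite [X in _ = _ + X]big1 ?addr0 => [|z /p_supp ->]; last by rewrite mul0r.
by apply: eq_bigr => z _; rewrite (cond_prob_unobserved _ Pne hc hw).
Qed.

End Independence.

Section ThresholdGreedy.
Variables (R : realType) (W V : finType) (c : W -> R).
Variable pick : history W V -> {set W} -> W.
Notation hist := (history W V).
Notation real := (realization W V).
Implicit Types (h : hist) (ys : real).
Hypothesis c_gt0 : forall w, 0 < c w.
Hypothesis pick_mem : forall h Rem, Rem != set0 -> pick h Rem \in Rem.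

Definition greedy_next (h : hist) : option W :=
  if ~: hist_users h == set0 then None else Some (pick h (~: hist_users h)).

Lemma greedy_next_unselected h w : greedy_next h = Some w -> w \notin hist_users h.
Proof.
by rewrite /greedy_next; case: ifPn => // hne [<-]; have := pick_mem h hne; rewrite inE.
Qed.

(* Greedy that stops, instead of skipping, at the first user overshooting [th]. *)
Definition threshold_greedy (th : R) (h : hist) : option W :=
  if greedy_next h is Some w then
    if hist_cost c h + c w <= th then Some w else None
  else None.

Definition greedy_upto th : real -> hist := policy_outcome (threshold_greedy th).

Lemma run_threshold_greedyS th n h ys :
  run_policy (threshold_greedy th) n.+1 h ys =
  if greedy_next h is Some w then
    if hist_cost c h + c w <= th
    then run_policy (threshold_greedy th) n (rcons h (w, ys w)) ys else h
  else h.
Proof.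
rewrite /= /threshold_greedy; case e: (greedy_next h) => [w|] //.
by case: ifP => // _; rewrite (negPf (greedy_next_unselected e)).
Qed.

Lemma card_unselected_rcons h w y n : (#|~: hist_users h| <= n.+1)%N ->
  w \notin hist_users h -> (#|~: hist_users (rcons h (w, y))| <= n)%N.
Proof.
move=> hcard hw; rewrite hist_users_rcons /= setCU setIC -setDE.
by move: hcard; rewrite (cardsD1 w) inE hw add1n ltnS.
Qed.

Lemma run_threshold_cost th n h ys : hist_cost c h <= th ->
  hist_cost c (run_policy (threshold_greedy th) n h ys) <= th.
Proof.
elim: n h => [|n IH] h // hc; rewrite run_threshold_greedyS.
by case: (greedy_next h) => [w|] //; case: ifP => // hle; rewrite IH ?hist_cost_rcons.
Qed.

Lemma greedy_upto_cost th ys : 0 <= th -> hist_cost c (greedy_upto th ys) <= th.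
Proof. by move=> th0; apply: run_threshold_cost; rewrite /hist_cost big_nil. Qed.

Lemma run_threshold_stuck th n h ys : th <= hist_cost c h ->
  run_policy (threshold_greedy th) n h ys = h.
Proof.
case: n => [|n] // hle; rewrite run_threshold_greedyS.
case: (greedy_next h) => [w|] //; case: ifP => // hle2.
by exfalso; have := c_gt0 w; move: hle hle2; lra.
Qed.

Lemma greedy_upto0 ys : greedy_upto 0 ys = [::].
Proof. by rewrite /greedy_upto /policy_outcome run_threshold_stuck // /hist_cost big_nil. Qed.

Lemma run_threshold_halts th n h ys w : (#|~: hist_users h| <= n)%N ->
  greedy_next (run_policy (threshold_greedy th) n h ys) = Some w ->
  th < hist_cost c (run_policy (threshold_greedy th) n h ys) + c w.
Proof.
elim: n h => [|n IH] h /=.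
  by rewrite leqn0 cards_eq0 /greedy_next => ->.
move=> hcard; rewrite -/(run_policy _ n.+1 h ys) run_threshold_greedyS.
case e: (greedy_next h) => [w'|]; last by rewrite e.
case: ifP => hle; last by rewrite e => -[<-]; rewrite ltNge hle.
by apply: IH; apply: card_unselected_rcons (greedy_next_unselected e).
Qed.

Definition set_cost (S : {set W}) : R := \sum_(w in S) c w.

(* Between consecutive achievable costs [s < t] the threshold greedy can only
   add the single user whose cost lands exactly on [t]. *)
Lemma run_threshold_next s t n h ys :
  (#|~: hist_users h| <= n)%N -> uniq (map fst h) -> s <= t ->
  (forall S, set_cost S < t -> set_cost S <= s) ->
  run_policy (threshold_greedy t) n h ys =
  if greedy_next (run_policy (threshold_greedy s) n h ys) is Some w then
    if hist_cost c (run_policy (threshold_greedy s) n h ys) + c w == t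
    then rcons (run_policy (threshold_greedy s) n h ys) (w, ys w)
    else run_policy (threshold_greedy s) n h ys
  else run_policy (threshold_greedy s) n h ys.
Proof.
move=> + + st no_cost_between; elim: n h => [|n IH] h.
  by rewrite leqn0 cards_eq0 /= /greedy_next => ->.
move=> hcard hu; rewrite !run_threshold_greedyS.
case e: (greedy_next h) => [w|]; last by rewrite e.
have hw := greedy_next_unselected e.
have hu' : uniq (map fst (rcons h (w, ys w))).
  by rewrite map_rcons rcons_uniq hu andbT -hist_usersE.
have [hs|hs] := boolP (hist_cost c h + c w <= s).
  by rewrite (le_trans hs st) IH // card_unselected_rcons.
have t_le : t <= hist_cost c h + c w.
  rewrite leNgt; apply: contra hs => lt_t.
  have := no_cost_between (hist_users (rcons h (w, ys w))).
  by rewrite /set_cost -hist_cost_uniq // hist_cost_rcons; apply.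
rewrite e; have [ct|ct] := eqVneq (hist_cost c h + c w) t.
  by rewrite ct lexx run_threshold_stuck // hist_cost_rcons ct.
by rewrite leNgt lt_neqAle eq_sym ct t_le.
Qed.

Lemma greedy_run_sup B n h Rem ys :
  hist_union h \subset hist_union (greedy_run c B pick n h Rem ys).
Proof.
elim: n h Rem => [|n IH] h Rem //=; case: ifP => // _.
apply: subset_trans (IH _ _); case: ifP => // _.
by rewrite hist_union_rcons subsetUl.
Qed.

Lemma run_threshold_sub_greedy_run B n h ys :
  hist_union (run_policy (threshold_greedy B) n h ys)
  \subset hist_union (greedy_run c B pick n h (~: hist_users h) ys).
Proof.
elim: n h => [|n IH] h //; rewrite run_threshold_greedyS /= {1}/greedy_next.
case: ifP => // hne; case: ifP => hle; last exact: greedy_run_sup.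
set w := pick h _; have -> : ~: hist_users h :\ w = ~: hist_users (rcons h (w, ys w)).
  by apply/setP => x; rewrite hist_users_rcons !inE negb_or andbC.
exact: IH.
Qed.

Lemma greedy_upto_sub_greedy B ys :
  hist_union (greedy_upto B ys) \subset hist_union (greedy_outcome c B pick ys).
Proof.
by rewrite /greedy_outcome -setC0 -(hist_users_nil W V); apply: run_threshold_sub_greedy_run.
Qed.

End ThresholdGreedy.

Section AdaptiveGreedy.
Variables (R : realType) (W V : finType) (f : {set V} -> R) (O : {set {set V}})
  (p : W -> {set V} -> R) (c : W -> R) (B : R).
Notation hist := (history W V).
Notation real := (realization W V).
Implicit Types (h : hist) (ys : real).
Hypothesis f_ge0 : forall A, 0 <= f A.
Hypothesis f_mono : forall A A' : {set V}, A \subset A' -> f A <= f A'.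
Hypothesis f_submod : forall (A A' : {set V}) (x : V), A \subset A' -> x \notin A' ->
  f (x |: A') - f A' <= f (x |: A) - f A.
Hypothesis p_ge0 : forall w y, 0 <= p w y.
Hypothesis p_supp : forall w y, y \notin O -> p w y = 0.
Hypothesis p_sum1 : forall w, \sum_(y : {set V}) p w y = 1.
Hypothesis c_gt0 : forall w, 0 < c w.
Hypothesis B_gt0 : 0 < B.
Variable pick : hist -> {set W} -> W.
Hypothesis pick_greedy : greedy_rule f p O c pick.

Notation E := (expect p).
Notation next := (greedy_next pick).

Lemma pick_greedy_mem h Rem : Rem != set0 -> pick h Rem \in Rem.
Proof. by move=> /(pick_greedy h) []. Qed.

Definition greedy_ratio h : R :=
  if next h is Some w then Delta f p O w h / c w else 0.

Lemma exp_gain_ge0 w A : 0 <= exp_gain p f w A.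
Proof. by apply: sumr_ge0 => z _; rewrite mulr_ge0 ?gain_ge0. Qed.

Lemma greedy_ratio_next h ys w : probY p ys != 0 -> consistent h ys ->
  next h = Some w -> c w * greedy_ratio h = exp_gain p f w (hist_union h).
Proof.
move=> Pne hc e; have hw := greedy_next_unselected pick_greedy_mem e.
by rewrite /greedy_ratio e (Delta_unobserved p_ge0 p_sum1 _ p_supp Pne hc hw) mulrC divfK ?gt_eqF.
Qed.

Lemma greedy_ratio_ge0 h ys : probY p ys != 0 -> consistent h ys -> 0 <= greedy_ratio h.
Proof.
move=> Pne hc; case e: (next h) => [w|]; last by rewrite /greedy_ratio e.
by rewrite -(pmulr_rge0 _ (c_gt0 w)) (greedy_ratio_next Pne hc e) exp_gain_ge0.
Qed.

Lemma exp_gain_le_ratio h ys w : probY p ys != 0 -> consistent h ys ->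
  w \notin hist_users h -> exp_gain p f w (hist_union h) <= c w * greedy_ratio h.
Proof.
move=> Pne hc hw.
have hne : ~: hist_users h != set0 by apply/set0Pn; exists w; rewrite inE.
have [_ pick_max] := pick_greedy h hne.
rewrite /greedy_ratio /greedy_next (negPf hne) -(Delta_unobserved p_ge0 p_sum1 _ p_supp Pne hc hw).
by rewrite -ler_pdivrMl // mulrC pick_max // inE.
Qed.

Lemma gain_union_le h t ys : consistent h ys -> consistent t ys -> uniq (map fst t) ->
  gain f (hist_union h) (hist_union t)
  <= \sum_(w in hist_users t :\: hist_users h) gain f (hist_union h) (ys w).
Proof.
move=> hch hct hut; rewrite (hist_union_consistent hct hut).
apply: le_trans (gain_bigcup_le f_mono f_submod _ _ _ _) _.
rewrite (big_setID (hist_users h)) /= [X in X + _]big1 ?add0r // => w /setIP[_ hw].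
by rewrite /gain (setUidPl (observed_sub_union hch hw)) subrr.
Qed.

Lemma expect_next_gain_centered (H : real -> hist) (Q : hist -> W -> bool) :
  nonanticipating H ->
  E (fun ys => if next (H ys) is Some w then
       if Q (H ys) w then gain f (hist_union (H ys)) (ys w) - exp_gain p f w (hist_union (H ys))
       else 0
     else 0) = 0.
Proof.
move=> H_na; pose J w h z := if (next h == Some w) && Q h w
  then gain f (hist_union h) z - exp_gain p f w (hist_union h) else 0.
rewrite (eq_expect (Y := fun ys =>
    \sum_w if w \in hist_users (H ys) then 0 else J w (H ys) (ys w))); last first.
  move=> ys _ /=; case e: (next (H ys)) => [w|]; last first.
    by rewrite big1 // => w _; rewrite /J e; case: ifP.
  rewrite (bigD1 w) //= big1 => [|w' w'w]; last first.
    by rewrite /J e /= (inj_eq Some_inj) eq_sym (negPf w'w); case: ifP.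
  by rewrite addr0 /J (negPf (greedy_next_unselected pick_greedy_mem e)) e eqxx.
rewrite expect_sum big1 // => w _.
rewrite (resample_unobserved p_sum1 (H := H) (G := fun _ => J w)) //.
apply: big1 => ys _; case: ifP => _; rewrite ?mulr0 // /J.
case: ((next (H ys) == Some w) && Q (H ys) w); last first.
  by rewrite big1 ?mulr0 // => z _; rewrite mulr0.
rewrite /exp_gain; under eq_bigr do rewrite mulrBr.
by rewrite sumrB -big_distrl /= p_sum1 mul1r subrr mulr0.
Qed.

Notation upto := (greedy_upto c pick).

Lemma greedy_upto_consistent th ys : consistent (upto th ys) ys.
Proof. exact: proj1 (policy_outcome_nonanticipating _) ys. Qed.

Definition greedy_interp th : R := E (fun ys =>
  f (hist_union (upto th ys)) + (th - hist_cost c (upto th ys)) * greedy_ratio (upto th ys)).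

Definition greedy_rate th : R := E (fun ys => greedy_ratio (upto th ys)).

Lemma greedy_interp0 : greedy_interp 0 = f set0.
Proof.
rewrite /greedy_interp -[RHS](expect_cst p_sum1); apply: eq_expect => ys _ /=.
by rewrite (greedy_upto0 c_gt0 pick_greedy_mem) /hist_union /hist_cost !big_nil subrr mul0r addr0.
Qed.

Lemma greedy_interp_step s t : 0 <= s -> s <= t ->
  (forall S, set_cost c S < t -> set_cost c S <= s) ->
  greedy_interp t = greedy_interp s + (t - s) * greedy_rate s.
Proof.
move=> s0 st no_cost_between.
pose Q h w := hist_cost c h + c w == t.
rewrite -[RHS]addr0 -(expect_next_gain_centered (H := upto s) Q (policy_outcome_nonanticipating _)).
rewrite /greedy_interp /greedy_rate -expectZ -!expectD; apply: eq_expect => ys Pne /=.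
set h := upto s ys; have hc : consistent h ys := greedy_upto_consistent s ys.
have -> : upto t ys = if next h is Some w then
    if hist_cost c h + c w == t then rcons h (w, ys w) else h else h.
  apply: run_threshold_next => //; first exact: pick_greedy_mem.
  by rewrite (hist_users_nil W V) setC0 cardsT.
rewrite /Q; case e: (next h) => [w|]; last ring.
case: eqP => ct; last ring.
rewrite hist_union_rcons hist_cost_rcons /= -(greedy_ratio_next Pne hc e) /gain.
have -> : c w = t - hist_cost c h by rewrite -ct; ring.
ring.
Qed.

Variable fmax : R.
Hypothesis fmax_bound : forall (S : {set W}) (ys : real) (y : {set V}),
  (forall s, ys s \in O) -> y \in O ->
  f ((\bigcup_(s in S) ys s) :|: y) - f (\bigcup_(s in S) ys s) <= fmax.

Lemma probY_supp ys : probY p ys != 0 -> forall w, ys w \in O.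
Proof.
move=> Pne w; apply: contraNT Pne => wO.
by rewrite (probY_split p w) p_supp ?mul0r.
Qed.

Lemma exp_gain_le_fmax h ys w : probY p ys != 0 -> consistent h ys ->
  uniq (map fst h) -> exp_gain p f w (hist_union h) <= fmax.
Proof.
move=> Pne hc hu; apply: le_trans (_ : \sum_z p w z * fmax <= _); last first.
  by rewrite -big_distrl /= p_sum1 mul1r.
apply: ler_sum => z _; have [zO|zO] := boolP (z \in O); last by rewrite p_supp ?mul0r.
by rewrite ler_wpM2l // /gain (hist_union_consistent hc hu) fmax_bound // => s; exact: probY_supp.
Qed.

Lemma fmax_ge0 : 0 <= fmax.
Proof.
(* [pick] witnesses that [W] is inhabited. *)
pose w0 := pick [::] set0.
have [y py] : exists y, p w0 y != 0.
  apply/existsP; apply: contraT; rewrite negb_exists => /forallP p0.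
  by have := p_sum1 w0; rewrite big1 => [/eqP|y _]; [rewrite eq_sym oner_eq0 | apply/eqP/negPn/p0].
have yO : y \in O by apply: contraT => /(p_supp w0) py0; rewrite py0 eqxx in py.
pose ys : real := [ffun=> y]; have ysO s : ys s \in O by rewrite ffunE.
by apply: le_trans (fmax_bound set0 ysO yO); rewrite big_set0 subr_ge0 f_mono ?subsetUl.
Qed.

Lemma greedy_interp_le_greedy :
  greedy_interp B <= g_avg f p (greedy_outcome c B pick) + fmax.
Proof.
rewrite /g_avg -(expect_cst p_sum1 fmax) -expectD.
apply: (ler_expect p_ge0) => ys Pne /=; set h := upto B ys.
have hc : consistent h ys := greedy_upto_consistent B ys.
apply: lerD; first by apply: f_mono; apply: greedy_upto_sub_greedy; exact: pick_greedy_mem.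
case e: (next h) => [w|]; last by rewrite /greedy_ratio e mulr0 fmax_ge0.
have := run_threshold_halts pick_greedy_mem (th := B) (n := #|W|) (h := [::]) (ys := ys).
rewrite (hist_users_nil W V) setC0 cardsT => /(_ c w (leqnn _) e) overshoot.
apply: le_trans (_ : c w * greedy_ratio h <= _).
  by rewrite ler_wpM2r ?(greedy_ratio_ge0 Pne hc) //; move: overshoot; lra.
rewrite (greedy_ratio_next Pne hc e) (exp_gain_le_fmax w Pne hc) //.
exact: policy_outcome_uniq.
Qed.

Section FeasiblePolicy.
Variable pi : hist -> option W.
Hypothesis pi_feas : feasible_policy c B pi.
Notation opt := (policy_outcome pi).

Lemma selected_cost_le h ys :
  \sum_(w in hist_users (opt ys) :\: hist_users h) c w <= B.
Proof.
apply: le_trans (pi_feas ys); rewrite hist_cost_uniq ?policy_outcome_uniq //.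
rewrite [X in _ <= X](big_setID (hist_users h)) /= lerDr.
by apply: sumr_ge0 => w _; exact: ltW.
Qed.

Section StoppedHistory.
Variables (H : real -> hist) (M : hist -> R).
Hypothesis H_na : nonanticipating H.
Hypothesis exp_gain_le_M : forall ys w, probY p ys != 0 ->
  w \notin hist_users (H ys) -> exp_gain p f w (hist_union (H ys)) <= c w * M (H ys).
Hypothesis M_ge0 : forall ys, probY p ys != 0 -> 0 <= M (H ys).

Lemma expect_selected_gain_le w :
  E (fun ys => if w \in hist_users (opt ys) :\: hist_users (H ys)
               then gain f (hist_union (H ys)) (ys w) else 0)
  <= E (fun ys => if w \in hist_users (opt ys) :\: hist_users (H ys)
                  then c w * M (H ys) else 0).
Proof.
pose G ys h z := if w \in hist_users (opt ys) then gain f (hist_union h) z else 0.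
have selE (x : R) ys : (if w \in hist_users (opt ys) :\: hist_users (H ys) then x else 0)
    = if w \in hist_users (H ys) then 0 else if w \in hist_users (opt ys) then x else 0.
  by rewrite in_setD; case: (w \in hist_users (H ys)).
rewrite (eq_expect (Y := fun ys =>
    if w \in hist_users (H ys) then 0 else G ys (H ys) (ys w))); last first.
  by move=> ys _ /=; rewrite selE.
rewrite (resample_unobserved p_sum1 (G := G)) // => [|ys z' h z]; last first.
  by rewrite /G nonanticipating_mem_upd //; exact: policy_outcome_nonanticipating.
apply: (ler_expect p_ge0) => ys Pne /=; rewrite selE /G; case: ifPn => // hw.
case: (w \in hist_users (opt ys)); last by rewrite big1 // => z _; rewrite mulr0.
exact: exp_gain_le_M.
Qed.

Lemma policy_gain_le :
  E (fun ys => gain f (hist_union (H ys)) (hist_union (opt ys)))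
  <= B * E (fun ys => M (H ys)).
Proof.
pose sel w ys := w \in hist_users (opt ys) :\: hist_users (H ys).
apply: (le_trans (y := \sum_w E (fun ys =>
    if sel w ys then gain f (hist_union (H ys)) (ys w) else 0))).
  rewrite -expect_sum; apply: (ler_expect p_ge0) => ys _; rewrite -big_mkcond /=.
  apply: gain_union_le; first by case: H_na.
    by case: (policy_outcome_nonanticipating pi).
  exact: policy_outcome_uniq.
apply: le_trans (ler_sum _ (fun w _ => expect_selected_gain_le w)) _.
rewrite -expect_sum -expectZ; apply: (ler_expect p_ge0) => ys Pne.
rewrite -big_mkcond /= -big_distrl /=.
by apply: ler_wpM2r; [exact: M_ge0 | exact: selected_cost_le].
Qed.

End StoppedHistory.

Lemma opt_sub_interp_le s : 0 <= s -> g_avg f p opt - greedy_interp s <= B * greedy_rate s.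
Proof.
move=> s0; have -> : g_avg f p opt = E (fun ys => f (hist_union (opt ys))) by [].
have gain_le_ratio ys w : probY p ys != 0 -> w \notin hist_users (upto s ys) ->
    exp_gain p f w (hist_union (upto s ys)) <= c w * greedy_ratio (upto s ys).
  by move=> Pne; apply: exp_gain_le_ratio Pne (greedy_upto_consistent s ys).
have ratio_ge0 ys : probY p ys != 0 -> 0 <= greedy_ratio (upto s ys).
  by move=> Pne; apply: greedy_ratio_ge0 Pne (greedy_upto_consistent s ys).
apply: le_trans (policy_gain_le (policy_outcome_nonanticipating _) gain_le_ratio ratio_ge0).
rewrite /greedy_interp -expectB; apply: (ler_expect p_ge0) => ys Pne /=.
set h := upto s ys; have hc : consistent h ys := greedy_upto_consistent s ys.
have f_opt : f (hist_union (opt ys)) <= f (hist_union h :|: hist_union (opt ys)).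
  by apply: f_mono; exact: subsetUr.
have credit_ge0 : 0 <= (s - hist_cost c h) * greedy_ratio h.
  by rewrite mulr_ge0 ?(greedy_ratio_ge0 Pne hc) // subr_ge0 (greedy_upto_cost c pick_greedy_mem).
by rewrite /gain; move: f_opt credit_ge0; lra.
Qed.

Lemma opt_sub_interp_contract s t : 0 <= s -> s <= t ->
  (forall S, set_cost c S < t -> set_cost c S <= s) ->
  g_avg f p opt - greedy_interp t
  <= (g_avg f p opt - greedy_interp s) * (1 - (t - s) / B).
Proof.
move=> s0 st no_cost_between; rewrite (greedy_interp_step s0 st no_cost_between).
have gap_le := opt_sub_interp_le s0.
have : (t - s) / B * (g_avg f p opt - greedy_interp s) <= (t - s) * greedy_rate s.
  by rewrite -mulrA ler_wpM2l ?subr_ge0 // mulrC ler_pdivrMr // mulrC.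
lra.
Qed.

Lemma opt_sub_interp_decay t : 0 <= t -> t <= B ->
  g_avg f p opt - greedy_interp t <= g_avg f p opt * expR (- (t / B)).
Proof.
have opt_ge0 : 0 <= g_avg f p opt.
  by apply: sumr_ge0 => ys _; rewrite mulr_ge0 ?probY_ge0 ?f_ge0.
have [n] := ubnP #|[set S | set_cost c S < t]|; elim: n t => // n IH t.
rewrite ltnS => card_lt t0 tB; have [->|t_neq0] := eqVneq t 0.
  by rewrite greedy_interp0 mul0r oppr0 expR0 mulr1 lerBlDr lerDl.
have t_gt0 : 0 < t by rewrite lt_def t_neq0 t0.
have set0_lt : set_cost c set0 < t by rewrite /set_cost big_set0.
case: (@arg_maxP _ _ _ set0 (fun S => set_cost c S < t) (set_cost c) set0_lt)
  => S0 S0_lt S0_max.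
set s := set_cost c S0.
have s0 : 0 <= s by apply: sumr_ge0 => w _; exact: ltW.
have card_s : (#|[set S | (set_cost c S < s)%R]| < n)%N.
  apply: leq_trans card_lt; apply: proper_card; apply/properP; split.
    by apply/subsetP => S; rewrite !inE => hS; exact: lt_trans hS S0_lt.
  by exists S0; rewrite !inE ?S0_lt ?ltxx.
have IHs := IH s card_s s0 (le_trans (ltW S0_lt) tB).
have contract := opt_sub_interp_contract s0 (ltW S0_lt) S0_max.
have x_le1 : (t - s) / B <= 1 by rewrite ler_pdivrMr // mul1r; move: s0 tB; lra.
apply: le_trans contract _; apply: le_trans (ler_wpM2r _ IHs) _; first lra.
have -> : t / B = s / B + (t - s) / B by rewrite -mulrDl addrC subrK.
rewrite opprD expRD mulrA ler_wpM2l ?mulr_ge0 ?expR_ge0 //.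
by have := expR_ge1Dx (- ((t - s) / B)); lra.
Qed.

Lemma opt_le_greedy :
  g_avg f p opt <= expR 1 / (expR 1 - 1) * (g_avg f p (greedy_outcome c B pick) + fmax).
Proof.
have := opt_sub_interp_decay (ltW B_gt0) (lexx B).
rewrite divrr ?unitfE ?gt_eqF // expRN.
have := greedy_interp_le_greedy; move: (greedy_interp B) => i.
have e_gt1 : 1 < expR 1 :> R by rewrite expR_gt1.
set e := expR 1; set g := _ + fmax; move: (g_avg f p opt) => o i_le gap_le.
have key : o * (1 - e^-1) <= g by lra.
have e_neq0 : e != 0 by rewrite gt_eqF // (lt_trans ltr01 e_gt1).
have e1_neq0 : e - 1 != 0 by rewrite gt_eqF // subr_gt0.
have -> : o = e / (e - 1) * (o * (1 - e^-1)) by field; rewrite e_neq0 e1_neq0.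
apply: ler_wpM2l key; apply: divr_ge0; last by rewrite subr_ge0 ltW.
by rewrite ltW // (lt_trans ltr01 e_gt1).
Qed.

End FeasiblePolicy.

End AdaptiveGreedy.

Theorem lemma6 (R : realType) (V W : finType) (f : {set V} -> R)
  (O : {set {set V}}) (p : W -> {set V} -> R) (c : W -> R) (B fmax : R)
  (f_ge0 : forall A, 0 <= f A)
  (f_mono : forall A A' : {set V}, A \subset A' -> f A <= f A')
  (f_submod : forall (A A' : {set V}) (x : V), A \subset A' -> x \notin A' ->
      f (x |: A') - f A' <= f (x |: A) - f A)
  (p_ge0 : forall w y, 0 <= p w y)
  (p_supp : forall w y, y \notin O -> p w y = 0)
  (p_sum1 : forall w, \sum_(y : {set V}) p w y = 1)
  (fmax_bound : forall (S : {set W}) (ys : {ffun W -> {set V}}) (y : {set V}),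
      (forall s, ys s \in O) -> y \in O ->
      f ((\bigcup_(s in S) ys s) :|: y) - f (\bigcup_(s in S) ys s) <= fmax)
  (c_gt0 : forall w, 0 < c w) (B_gt0 : 0 < B)
  (pi_opt : history W V -> option W)
  (opt_feas : feasible_policy c B pi_opt)
  (opt_max : forall pi, feasible_policy c B pi ->
      g_avg f p (policy_outcome pi) <= g_avg f p (policy_outcome pi_opt))
  (pick : history W V -> {set W} -> W)
  (pick_greedy : greedy_rule f p O c pick) :
  g_avg f p (policy_outcome pi_opt)
    <= expR 1 / (expR 1 - 1) * (g_avg f p (greedy_outcome c B pick) + fmax).
Proof.
(* The bound holds for every budget-feasible policy. *)
exact: (opt_le_greedy f_ge0 f_mono f_submod p_ge0 p_supp p_sum1 c_gt0 B_gt0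
  pick_greedy fmax_bound opt_feas).
Qed.
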